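(* Let $\mathbb{F}$ be a finite field and $f\colon\mathbb{F}^n\times[m]\to\mathbb{F}$ be such that the map $x\mapsto (f(x,1),\dots,f(x,m))$ is $k$-wise independent. Suppose there is a non-adaptive static data structure for $f$ with space $s\ge 2$ and query time $t=2$, and suppose $k>8\log(s)$. Then \[ s \;\ge\; m - \frac{16\, m\log(s)}{k}. \]
   Context: A function $F\colon\mathbb{F}^n\to\mathbb{F}^m$ is $k$-wise independent if for every set of $k$ output coordinates, when $x$ is uniform on $\mathbb{F}^n$, the restriction of $F(x)$ to these coordinates is uniformly distributed on $\mathbb{F}^k$. A non-adaptive static data structure with space $s$ and query time $t$ for $f\colon\mathbb{F}^n\times[m]\to\mathbb{F}$ consists of an arbitrary preprocessing map $x\mapsto P(x)\in\mathbb{F}^s$ and, for each query $i\in[m]$, a fixed set of at most $t$ cell positions (independent of $x$) together with an arbitrary function of those cells' contents that equals $f(x,i)$ for all $x$. Logarithms are base 2. *)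

From HB Require Import structures.
From mathcomp Require Import all_boot all_order all_algebra all_field.
From mathcomp Require Import reals exp.
Set Implicit Arguments. Unset Strict Implicit. Unset Printing Implicit Defensive.
Import Order.TTheory GRing.Theory Num.Theory.
Local Open Scope ring_scope.

Definition log2 (R : realType) (x : R) : R := ln x / ln 2.

(* F : finite field; inputs x in F^n are {ffun 'I_n -> F};
   f x i is the i-th output, i : 'I_m (= [m]). *)

(* k-wise independence: for every set S of k output coordinates, F(x)
   restricted to S is uniform on F^S when x is uniform on F^n, i.e. every
   assignment a of values to the coordinates in S is hit by exactly
   |F|^n / |F|^k inputs. *)
Definition kwise_independent (F : finFieldType) (n m k : nat)
  (f : {ffun 'I_n -> F} -> 'I_m -> F) : Prop :=
  forall (S : {set 'I_m}), #|S| = k ->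
  forall (a : {ffun 'I_m -> F}),
    (#|[set x : {ffun 'I_n -> F} | [forall i in S, f x i == a i]]|
       * #|F| ^ k)%N = (#|F| ^ n)%N.

Definition nonadaptive_ds (F : finFieldType) (n m : nat)
  (f : {ffun 'I_n -> F} -> 'I_m -> F) (s t : nat) : Prop :=
  exists (P : {ffun 'I_n -> F} -> {ffun 'I_s -> F})
         (Q : 'I_m -> {set 'I_s})
         (g : 'I_m -> {ffun 'I_s -> F} -> F),
    [/\ forall i, (#|Q i| <= t)%N,
        forall i (c c' : {ffun 'I_s -> F}),
          (forall j, j \in Q i -> c j = c' j) -> g i c = g i c'
      & forall x i, f x i = g i (P x)].

From HB Require Import structures.
From mathcomp Require Import all_boot all_order all_algebra all_field.
From mathcomp Require Import reals exp.
From mathcomp Require Import zify lra.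
Import Order.TTheory GRing.Theory Num.Theory.

Set Implicit Arguments. Unset Strict Implicit. Unset Printing Implicit Defensive.

(* Each query reads a set of at most two cells: an edge of a multigraph on the s
   cells.  A set S of at most k queries can only read the cells it covers, yet by
   k-wise independence its answers take all |F|^|S| values; so every dense set of
   queries (more queries than covered cells) has more than k queries.
   It remains to find a dense set of at most O(log s) * m / (m - s) queries.
   A vertex of degree 1 is deleted with its edge, the two edges through a vertex of
   degree 2 are merged into one edge standing for both, and an edge standing for
   more than its share of original edges is dropped; each step keeps track of how
   the deficiency of the current graph bounds that of the original one.  Once all
   degrees are at least 3, a breadth-first ball doubles at each step until, after
   O(log s) steps, it contains two non-tree edges, which close up with tree paths
   into a dense set of O(log s) edges. *)

Lemma card_bigcup_leq (I T : finType) (P : {set I}) (F : I -> {set T}) :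
  #|\bigcup_(i in P) F i| <= \sum_(i in P) #|F i|.
Proof.
elim/big_ind2: _ => [|n1 X n2 Y leX leY|//]; first by rewrite cards0.
by have [le_U _] := leq_card_setU X Y; apply: leq_trans le_U _; rewrite leq_add.
Qed.

Lemma card_le2_eq_set2 (T : finType) (X : {set T}) a b :
  #|X| <= 2 -> a \in X -> b \in X -> a != b -> X = [set a; b].
Proof.
move=> X2 aX bX ab; apply/eqP; rewrite eq_sym eqEcard subUset !sub1set aX bX.
by rewrite cards2 ab.
Qed.

Lemma card_set_sum (T : finType) (A : {set T}) (P : pred T) :
  #|[set x in A | P x]| = \sum_(x in A) P x.
Proof.
rewrite -sum1_card big_mkcond [RHS]big_mkcond /=; apply: eq_bigr => x _.
by rewrite inE; case: (x \in A); case: (P x).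
Qed.

Lemma cardsD1_in (T : finType) (A : {set T}) x : x \in A -> #|A :\ x| = #|A|.-1.
Proof. by move=> xA; rewrite [#|A|](cardsD1 x) xA. Qed.

Lemma exists_superset_card (T : finType) (S : {set T}) k :
  #|S| <= k -> k <= #|T| -> exists2 X : {set T}, S \subset X & #|X| = k.
Proof.
move=> /subnK <-; move: (k - #|S|) => d; elim: d S => [|d IH] S dT; first by exists S.
have /set0Pn[i iS] : ~: S != set0 by rewrite -card_gt0 cardsCs setCK; lia.
have [|X sX cX] := IH (i |: S); first by rewrite cardsU1 -in_setC iS; lia.
exists X; last by rewrite cX cardsU1 -in_setC iS addSnnS.
exact: subset_trans (subsetUr _ _) sX.
Qed.

Section Hypergraph.
Variables I V : finType.

Definition covered (T : finType) (Q : I -> {set T}) (S : {set I}) := \bigcup_(e in S) Q e.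
Definition dense (T : finType) (Q : I -> {set T}) (S : {set I}) := #|covered Q S| < #|S|.
Definition degree (Q : I -> {set V}) (A : {set I}) (x : V) := #|[set e in A | x \in Q e]|.

Lemma covered_sub (T : finType) (Q : I -> {set T}) (S1 S2 : {set I}) :
  S1 \subset S2 -> covered Q S1 \subset covered Q S2.
Proof. by move=> sub; apply/bigcupsP => e eS; apply: bigcup_sup; exact: (subsetP sub). Qed.

Section BreadthFirstSearch.
Variables (A : {set I}) (Q : I -> {set V}) (e0 : I) (rho : V).
Hypothesis Q_le2 : forall e, e \in A -> #|Q e| <= 2.
Hypothesis degree_ge3 : forall x, degree Q A x != 0 -> 2 < degree Q A x.
Hypothesis e0A : e0 \in A.
Hypothesis rho_e0 : rho \in Q e0.

Fixpoint ball r := if r is r'.+1 then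
  ball r' :|: \bigcup_(e in A | Q e :&: ball r' != set0) Q e else [set rho].

Definition depth u := find (fun r => u \in ball r) (iota 0 #|V|.+1).

(* [e0] and [rho] are junk defaults: only the vertices of a ball other than [rho]
   have a genuine parent edge. *)
Definition parent_edge u :=
  odflt e0 [pick e in A | (u \in Q e) && (Q e :&: ball (depth u).-1 != set0)].
Definition parent u :=
  if u == rho then rho else odflt rho [pick y in Q (parent_edge u) :&: ball (depth u).-1].

Definition inner_edges r := [set e in A | Q e \subset ball r].
Definition tree_edges r := parent_edge @: (ball r :\ rho).

Lemma ball_mono i j : i <= j -> ball i \subset ball j.
Proof.
move=> /subnK <-; elim: (j - i) => [|d IH] //=.
by apply: subset_trans IH _; rewrite ?addSn /=; exact: subsetUl.
Qed.

Lemma root_in_ball r : rho \in ball r.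
Proof. by apply: (subsetP (ball_mono (leq0n r))); rewrite /= set11. Qed.

Lemma depthP u r : r <= #|V| -> u \in ball r -> depth u <= r /\ u \in ball (depth u).
Proof.
move=> rV uB; have has_u : has (fun r => u \in ball r) (iota 0 #|V|.+1).
  by apply/hasP; exists r => //; rewrite mem_iota.
have dV : depth u < #|V|.+1 by rewrite -[#|V|.+1](size_iota 0) -has_find.
split; last by have := nth_find 0 has_u; rewrite nth_iota.
by rewrite leqNgt; apply/negP => /(before_find 0); rewrite nth_iota // uB.
Qed.

Lemma depth_min u j : j < depth u -> u \notin ball j.
Proof.
move=> jd; have := before_find 0 jd.
have dV : depth u <= #|V|.+1 by rewrite -[#|V|.+1](size_iota 0) find_size.
by rewrite nth_iota ?(leq_trans jd) // => ->.
Qed.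

Lemma depth_root : depth rho = 0.
Proof. by have [] := depthP (leq0n _) (root_in_ball 0); rewrite leqn0 => /eqP. Qed.

Lemma depth0_root u r : r <= #|V| -> u \in ball r -> depth u = 0 -> u = rho.
Proof. by move=> rV uB d0; have [_] := depthP rV uB; rewrite d0 /= inE => /eqP. Qed.

Lemma parent_edgeP u r : r <= #|V| -> u \in ball r -> u != rho ->
  [/\ parent_edge u \in A, u \in Q (parent_edge u), parent u \in Q (parent_edge u),
      parent u \in ball (depth u).-1 & 0 < depth u].
Proof.
move=> rV uB ur; have [dr uBd] := depthP rV uB.
case dE: (depth u) => [|d]; first by move: (depth0_root rV uB dE); move/eqP: ur.
have uBd' : u \notin ball d by apply: depth_min; rewrite dE.
move: uBd; rewrite dE /= inE (negbTE uBd') /= => /bigcupP[e /andP[eA eB] uQe].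
rewrite /parent (negbTE ur) /parent_edge dE /=.
case: pickP => [e' /andP[e'A /andP[uQ' ne]]|/(_ e)]; last by rewrite eA uQe eB.
case: pickP => [y|]; last by move/set0Pn: ne => [y yi] /(_ y); rewrite yi.
by rewrite inE => /andP[yQ yB]; split.
Qed.

Lemma depth_parent u r : r <= #|V| -> u \in ball r -> u != rho ->
  depth (parent u) < depth u.
Proof.
move=> rV uB ur; have [_ _ _ pB dp] := parent_edgeP rV uB ur.
have [dr _] := depthP rV uB.
have [+ _] := depthP (leq_trans (leq_pred _) (leq_trans dr rV)) pB.
by move/leq_ltn_trans; apply; rewrite prednK.
Qed.

Lemma parent_in_ball u r : r <= #|V| -> u \in ball r -> parent u \in ball r.
Proof.
move=> rV uB; case: (eqVneq u rho) => [->|ur]; first by rewrite /parent eqxx root_in_ball.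
have [_ _ _ pB _] := parent_edgeP rV uB ur; have [dr _] := depthP rV uB.
by apply: (subsetP (ball_mono _)) pB; apply: leq_trans (leq_pred _) dr.
Qed.

Lemma parent_edgeE u r : r <= #|V| -> u \in ball r -> u != rho ->
  Q (parent_edge u) = [set u; parent u].
Proof.
move=> rV uB ur; have [pA uQ pQ pB dp] := parent_edgeP rV uB ur.
apply: card_le2_eq_set2 => //; first exact: Q_le2.
apply/eqP => up; move: pB; rewrite -up; apply/negP/depth_min.
by rewrite prednK.
Qed.

Lemma parent_edge_inj r : r <= #|V| -> {in ball r :\ rho &, injective parent_edge}.
Proof.
move=> rV u w /setD1P[ur uB] /setD1P[wr wB] pe_uw; apply/eqP/negPn/negP => uw.
have [_ uQ _ _ _] := parent_edgeP rV uB ur; have [_ wQ _ _ _] := parent_edgeP rV wB wr.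
move: uQ; rewrite pe_uw (parent_edgeE rV wB wr) !inE (negbTE uw) => /eqP u_pw.
move: wQ; rewrite -pe_uw (parent_edgeE rV uB ur) !inE eq_sym (negbTE uw) => /eqP w_pu.
have := depth_parent rV uB ur; have := depth_parent rV wB wr.
by rewrite -u_pw -w_pu => /ltn_trans/[apply]; rewrite ltnn.
Qed.

Lemma tree_sub_inner r : r <= #|V| -> tree_edges r \subset inner_edges r.
Proof.
move=> rV; apply/subsetP => _ /imsetP[u /setD1P[ur uB] ->].
have [pA _ _ _ _] := parent_edgeP rV uB ur.
rewrite inE pA (parent_edgeE rV uB ur) subUset !sub1set uB.
exact: parent_in_ball.
Qed.

Lemma card_tree_edges r : r <= #|V| -> #|tree_edges r| = #|ball r|.-1.
Proof.
by move=> rV; rewrite card_in_imset ?cardsD1_in ?root_in_ball //; exact: parent_edge_inj.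
Qed.

Lemma card_inner_le_ball r : r <= #|V| -> #|inner_edges r :\: tree_edges r| <= 1 ->
  #|inner_edges r| <= #|ball r|.
Proof.
move=> rV extra1; rewrite -(cardsID (tree_edges r)) (setIidPr (tree_sub_inner rV)).
have : 0 < #|ball r| by apply/card_gt0P; exists rho; exact: root_in_ball.
by rewrite card_tree_edges //; lia.
Qed.

Lemma degree_ball u r : u \in ball r -> degree Q A u != 0.
Proof.
rewrite /degree -lt0n card_gt0; elim: r u => [|r IH] u /=.
  by rewrite inE => /eqP ->; apply/set0Pn; exists e0; rewrite inE e0A rho_e0.
case/setUP=> [/IH //|/bigcupP[e /andP[eA _] uQ]].
by apply/set0Pn; exists e; rewrite inE eA uQ.
Qed.

Lemma edge_ball_count e r : e \in A ->
  #|Q e :&: ball r| <= (e \in inner_edges r) + (e \in inner_edges r.+1).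
Proof.
move=> eA; rewrite !inE eA /=; have [sub|nsub] := boolP (Q e \subset ball r).
  by rewrite (subset_trans sub (ball_mono (leqnSn r))) (setIidPl sub) Q_le2.
have [->|meet] := eqVneq (Q e :&: ball r) set0; first by rewrite cards0.
have -> : Q e \subset ball r.+1.
  by apply/subsetP => x xQ; apply/setUP; right; apply/bigcupP; exists e; rewrite ?eA.
rewrite -ltnS; apply: leq_trans (Q_le2 eA); apply: proper_card.
by rewrite properEneq subsetIl andbT; apply: contra nsub => /eqP <-; rewrite subsetIr.
Qed.

(* Double counting incidences: ball vertices have degree at least 3, and an edge
   meeting ball r twice lies in both inner_edges r and inner_edges r.+1. *)
Lemma ball_growth r : 3 * #|ball r| <= #|inner_edges r| + #|inner_edges r.+1|.
Proof.
have -> : #|inner_edges r| + #|inner_edges r.+1| =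
          \sum_(e in A) ((e \in inner_edges r) + (e \in inner_edges r.+1)).
  rewrite big_split /= -!card_set_sum; congr (_ + _); apply: eq_card => e;
  by rewrite !inE; case: (e \in A).
apply: leq_trans (_ : _ <= \sum_(e in A) #|Q e :&: ball r|) _; last first.
  by apply: leq_sum => e eA; exact: edge_ball_count.
rewrite mulnC -sum_nat_const.
apply: leq_trans (_ : \sum_(u in ball r) degree Q A u <= _).
  by apply: leq_sum => u uB; exact: degree_ge3 (degree_ball uB).
rewrite (eq_bigr (fun u => \sum_(e in A) (u \in Q e))); last first.
  by move=> u _; rewrite /degree card_set_sum.
rewrite exchange_big; apply: leq_sum => e _.
by rewrite -card_set_sum; apply: eq_leq; apply: eq_card => x; rewrite !inE andbC.
Qed.

Lemma ball_doubling R : R <= #|V| ->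
  (forall j, j <= R -> #|inner_edges j :\: tree_edges j| <= 1) ->
  forall j, j <= R -> 2 ^ j <= #|ball j|.
Proof.
move=> RV extra1; elim=> [|j IH] jR; first by apply/card_gt0P; exists rho; exact: root_in_ball.
have inner_le i : i <= R -> #|inner_edges i| <= #|ball i|.
  by move=> iR; apply: card_inner_le_ball (extra1 i iR); exact: leq_trans RV.
have := ball_growth j; have := inner_le _ (ltnW jR); have := inner_le _ jR.
have := IH (ltnW jR); rewrite expnS mul2n -addnn.
move: (2 ^ j) #|ball j| #|ball j.+1| #|inner_edges j| #|inner_edges j.+1|; lia.
Qed.

Lemma trunc_log2_lt n : 0 < n -> trunc_log 2 n < n.
Proof. by move=> n0; apply: leq_trans (trunc_logP (isT : 1 < 2) n0); exact: ltn_expl. Qed.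

Lemma exists_two_extra_edges :
  exists2 r, r <= (trunc_log 2 #|V|).+1 & 1 < #|inner_edges r :\: tree_edges r|.
Proof.
set R := (trunc_log 2 #|V|).+1.
have RV : R <= #|V| by apply: trunc_log2_lt; apply/card_gt0P; exists rho.
have [/existsP[j extra2]|/existsPn none] :=
  boolP [exists j : 'I_R.+1, 1 < #|inner_edges j :\: tree_edges j|].
  by exists j => //; rewrite -ltnS ltn_ord.
suff : 2 ^ R <= #|V| by rewrite leqNgt /R trunc_log_ltn.
apply: leq_trans (ball_doubling RV _ (leqnn R)) (max_card _) => j jR.
by rewrite leqNgt; exact: none (Ordinal (jR : j < R.+1)).
Qed.

Definition ancestors r a := [set iter j parent a | j : 'I_r.+1].

Lemma iter_parent_in_ball r a j : r <= #|V| -> a \in ball r -> iter j parent a \in ball r.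
Proof. by move=> rV aB; elim: j => //= j IH; exact: parent_in_ball. Qed.

Lemma depth_iter_parent r a j : r <= #|V| -> a \in ball r ->
  depth (iter j parent a) <= depth a - j.
Proof.
move=> rV aB; elim: j => [|j IH]; first by rewrite subn0.
rewrite iterS; set u := iter j parent a.
have uB : u \in ball r by exact: iter_parent_in_ball.
have [->|ur] := eqVneq u rho; first by rewrite /parent eqxx depth_root.
rewrite subnS -ltnS; apply: leq_trans (depth_parent rV uB ur) _.
by apply: leq_trans IH _; exact: leqSpred.
Qed.

Lemma iter_parent_root r a : r <= #|V| -> a \in ball r -> iter r parent a = rho.
Proof.
move=> rV aB; have [+ _] := depthP rV aB; rewrite -subn_eq0 => /eqP dr.
have := depth_iter_parent r rV aB; rewrite dr leqn0 => /eqP.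
exact: depth0_root rV (iter_parent_in_ball r rV aB).
Qed.

Lemma ancestors_sub_ball r a : r <= #|V| -> a \in ball r -> ancestors r a \subset ball r.
Proof. by move=> rV aB; apply/subsetP => _ /imsetP[j _ ->]; exact: iter_parent_in_ball. Qed.

Lemma mem_ancestors r a : a \in ancestors r a.
Proof. by apply/imsetP; exists ord0. Qed.

Lemma root_in_ancestors r a : r <= #|V| -> a \in ball r -> rho \in ancestors r a.
Proof. by move=> rV aB; apply/imsetP; exists ord_max; rewrite //= iter_parent_root. Qed.

Lemma parent_in_ancestors r a u : r <= #|V| -> a \in ball r ->
  u \in ancestors r a -> parent u \in ancestors r a.
Proof.
move=> rV aB /imsetP[j _ ->]; have [jr|rj] := ltnP j r.
  by apply/imsetP; exists (Ordinal (jr : j.+1 < r.+1)).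
have -> : nat_of_ord j = r by apply/eqP; rewrite eqn_leq rj -ltnS ltn_ord.
by rewrite iter_parent_root // /parent eqxx root_in_ancestors.
Qed.

Lemma card_ancestors r a : #|ancestors r a| <= r.+1.
Proof. by apply: leq_trans (leq_imset_card _ _) _; rewrite card_ord. Qed.

(* A parent-closed set X of vertices spans the |X| - 1 parent edges of X :\ rho;
   two more edges inside X make the edge set dense. *)
Lemma dense_parent_closed r (X : {set V}) e1 e2 : r <= #|V| ->
  X \subset ball r -> rho \in X -> {in X, forall u, parent u \in X} ->
  e1 \in inner_edges r :\: tree_edges r -> e2 \in inner_edges r :\: tree_edges r ->
  e1 != e2 -> Q e1 :|: Q e2 \subset X ->
  exists D : {set I}, [/\ D \subset A, dense Q D & #|D| = #|X|.+1].
Proof.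
move=> rV XB rhoX parentX.
rewrite !inE => /andP[e1T /andP[e1A _]] /andP[e2T /andP[e2A _]] e12 QX.
pose TX := parent_edge @: (X :\ rho).
have TX_tree : TX \subset tree_edges r by apply: imsetS; apply: setSD.
have TXA : TX \subset A.
  apply: subset_trans TX_tree (subset_trans (tree_sub_inner rV) _).
  by apply/subsetP => e; rewrite inE => /andP[].
have cTX : #|TX| = #|X|.-1.
  rewrite card_in_imset ?cardsD1_in //; apply: sub_in2 (parent_edge_inj rV) => u.
  by rewrite !inE => /andP[-> /(subsetP XB)].
have e1TX : e1 \notin TX by apply: contra e1T; exact: (subsetP TX_tree).
have e2TX : e2 \notin TX by apply: contra e2T; exact: (subsetP TX_tree).
have cD : #|e1 |: (e2 |: TX)| = #|X|.+1.
  rewrite !cardsU1 !inE negb_or e12 e1TX e2TX cTX /= add1n add1n prednK //.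
  by apply/card_gt0P; exists rho.
exists (e1 |: (e2 |: TX)); split => //; first by rewrite !subUset !sub1set e1A e2A TXA.
rewrite /dense cD ltnS; apply: subset_leq_card; apply/bigcupsP => e.
rewrite !inE => /orP[/eqP->|/orP[/eqP->|/imsetP[u /setD1P[ur uX] ->]]].
- exact: subset_trans (subsetUl _ _) QX.
- exact: subset_trans (subsetUr _ _) QX.
rewrite (parent_edgeE rV (subsetP XB u uX) ur) subUset !sub1set uX.
exact: parentX.
Qed.

Lemma two_extra_edges_dense r e1 e2 : r <= #|V| ->
  (forall e, e \in A -> Q e != set0) ->
  e1 \in inner_edges r :\: tree_edges r -> e2 \in inner_edges r :\: tree_edges r ->
  e1 != e2 -> exists D : {set I}, [/\ D \subset A, dense Q D & #|D| <= 4 * r.+1 + 1].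
Proof.
move=> rV Q_neq0 e1N e2N e12.
have /and3P[e1A e2A QB] : [&& e1 \in A, e2 \in A & Q e1 :|: Q e2 \subset ball r].
  by move: e1N e2N; rewrite !inE subUset => /and3P[_ -> ->] /and3P[_ -> ->].
pose X := \bigcup_(a in Q e1 :|: Q e2) ancestors r a.
have aB a : a \in Q e1 :|: Q e2 -> a \in ball r by move/(subsetP QB).
have XB : X \subset ball r.
  by apply/bigcupsP => a /aB; exact: ancestors_sub_ball.
have rhoX : rho \in X.
  have /set0Pn[a aQ] := Q_neq0 _ e1A.
  have aQ12 : a \in Q e1 :|: Q e2 by rewrite inE aQ.
  by apply/bigcupP; exists a => //; exact: root_in_ancestors (aB _ aQ12).
have parentX : {in X, forall u, parent u \in X}.
  move=> u /bigcupP[a aQ uanc]; apply/bigcupP; exists a => //.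
  exact: parent_in_ancestors (aB _ aQ) uanc.
have QX : Q e1 :|: Q e2 \subset X.
  by apply/subsetP => a aQ; apply/bigcupP; exists a => //; exact: mem_ancestors.
have [D [DA Ddense cD]] := dense_parent_closed rV XB rhoX parentX e1N e2N e12 QX.
exists D; split => //; rewrite cD addn1 ltnS.
apply: leq_trans (card_bigcup_leq _ _) _.
apply: leq_trans (_ : _ <= \sum_(a in Q e1 :|: Q e2) r.+1) _.
  by apply: leq_sum => a _; exact: card_ancestors.
rewrite sum_nat_const leq_mul2r /=.
have [le_U _] := leq_card_setU (Q e1) (Q e2); apply: leq_trans le_U _.
exact: leq_add (Q_le2 e1A) (Q_le2 e2A).
Qed.
End BreadthFirstSearch.

Definition short_dense_bound := 4 * (trunc_log 2 #|V|).+2 + 1.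

Lemma short_dense_subset (A : {set I}) (Q : I -> {set V}) :
  (forall e, e \in A -> #|Q e| <= 2) -> (forall x, degree Q A x != 0 -> 2 < degree Q A x) ->
  A != set0 -> exists D : {set I}, [/\ D \subset A, dense Q D & #|D| <= short_dense_bound].
Proof.
move=> Q_le2 degree_ge3 /set0Pn[e0 e0A].
have [/existsP[e /andP[eA /eqP Qe]]|/existsPn Q_neq0] := boolP [exists e in A, Q e == set0].
  exists [set e]; rewrite sub1set eA /dense /covered big_set1 Qe cards0 cards1.
  by split => //; rewrite addn1.
have {}Q_neq0 e : e \in A -> Q e != set0 by move=> eA; have := Q_neq0 e; rewrite eA.
have /set0Pn[rho rho_e0] := Q_neq0 e0 e0A.
have [r rR /card_gt1P[e1 [e2 [e1N e2N e12]]]] :=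
  exists_two_extra_edges Q_le2 degree_ge3 e0A rho_e0.
have rV : r <= #|V|.
  by apply: leq_trans rR (trunc_log2_lt _); apply/card_gt0P; exists rho.
have [D [DA Ddense cD]] := two_extra_edges_dense Q_le2 rV Q_neq0 e1N e2N e12.
by exists D; split => //; apply: leq_trans cD _; rewrite leq_add2r leq_mul2l ltnS.
Qed.
End Hypergraph.

Section Reduction.
Variables (I V : finType) (Q0 : I -> {set V}).
Implicit Types (A D S : {set I}) (Q : I -> {set V}) (R : I -> {set I}).

Definition weight R A := \sum_(e in A) #|R e|.

(* The current edge e stands for the set R e of original edges; every set S of
   current edges has at most the deficiency of the original edges it stands for. *)
Definition reduction A Q R :=
  (forall e, e \in A -> #|Q e| <= 2) /\
  (forall S, S \subset A ->
     #|S| + #|covered Q0 (covered R S)| <= #|covered R S| + #|covered Q S|).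

Definition dense_certificate A Q R := exists U,
  dense Q0 U /\ #|U| * (#|A| - #|covered Q A|) <= short_dense_bound V * weight R A.

Lemma weight_sub R A1 A2 : A1 \subset A2 -> weight R A1 <= weight R A2.
Proof.
by move=> sub; rewrite /weight [X in _ <= X](big_setID A1) /= (setIidPr sub) leq_addr.
Qed.

Lemma weightD1 R A e : e \in A -> weight R A = #|R e| + weight R (A :\ e).
Proof.
move=> eA; rewrite /weight (bigD1 e) //=; congr (_ + _).
by apply: eq_bigl => f; rewrite !inE andbC.
Qed.

Lemma reduction_sub A A' Q R : A' \subset A -> reduction A Q R -> reduction A' Q R.
Proof.
move=> sub [Q_le2 deficiency]; split=> [e /(subsetP sub)|S SA']; first exact: Q_le2.
exact/deficiency/(subset_trans SA').
Qed.

Lemma covered_subD1 Q A D x : D \subset A -> {in D, forall f, x \notin Q f} ->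
  covered Q D \subset covered Q A :\ x.
Proof.
move=> sub avoid; apply/subsetP => y yD; rewrite !inE (subsetP (covered_sub Q sub) y yD) andbT.
by case/bigcupP: yD => f fD; apply: contraTneq => ->; exact: avoid.
Qed.

Lemma certificate_drop_vertex A Q R A' Q' R' x :
  #|A| = #|A'|.+1 -> x \in covered Q A -> covered Q' A' \subset covered Q A :\ x ->
  weight R' A' <= weight R A -> (dense Q' A' -> dense_certificate A' Q' R') ->
  dense Q A -> dense_certificate A Q R.
Proof.
move=> cA xA /subset_leq_card; rewrite cardsD1_in // => cV w' IH Adense.
have xspan : 0 < #|covered Q A| by apply/card_gt0P; exists x.
have [|U [Udense Ub]] := IH; first by move: Adense; rewrite /dense; lia.
exists U; split => //; apply: leq_trans (leq_trans _ Ub) (leq_mul (leqnn _) w').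
by rewrite leq_mul2l; apply/orP; right; lia.
Qed.

Lemma pendant_edge A Q x e : [set f in A | x \in Q f] = [set e] ->
  [/\ #|A| = #|A :\ e|.+1, x \in covered Q A & covered Q (A :\ e) \subset covered Q A :\ x].
Proof.
move=> incident; have : e \in [set f in A | x \in Q f] by rewrite incident set11.
rewrite inE => /andP[eA xe]; rewrite (cardsD1 e) eA add1n.
split=> //; first by apply/bigcupP; exists e.
apply: covered_subD1 (subD1set _ _) _ => f /setD1P[fe fA]; apply: contra fe => xf.
by rewrite -in_set1 -incident inE fA.
Qed.

Definition contract Q e1 e2 x f := if f == e1 then (Q e1 :|: Q e2) :\ x else Q f.
Definition merge R e1 e2 f := if f == e1 then R e1 :|: R e2 else R f.

Section Contraction.
Variables (A : {set I}) (Q : I -> {set V}) (R : I -> {set I}) (x : V) (e1 e2 : I).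
Hypothesis incident : [set f in A | x \in Q f] = [set e1; e2].
Hypothesis e12 : e1 != e2.

Let Qc := contract Q e1 e2 x.
Let Rc := merge R e1 e2.

Lemma incident_edges : [/\ e1 \in A, e2 \in A, x \in Q e1 & x \in Q e2].
Proof.
have : e1 \in [set f in A | x \in Q f] by rewrite incident !inE eqxx.
have : e2 \in [set f in A | x \in Q f] by rewrite incident !inE eqxx orbT.
by rewrite !inE => /andP[-> ->] /andP[-> ->].
Qed.

Lemma incident_notin f : f \in A -> f != e1 -> f != e2 -> x \notin Q f.
Proof.
move=> fA fe1 fe2; apply/negP => xf.
have : f \in [set f in A | x \in Q f] by rewrite inE fA xf.
by rewrite incident !inE (negbTE fe1) (negbTE fe2).
Qed.

Lemma covered_contract : covered Qc (A :\ e2) \subset covered Q A :\ x.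
Proof.
have [e1A e2A _ _] := incident_edges.
apply/bigcupsP => f /setD1P[fe2 fA]; apply/subsetP => y; rewrite /Qc /contract.
case: eqVneq => [_|fe1]; rewrite !inE.
  by case/andP=> -> /orP[] yQ; apply/bigcupP; [exists e1 | exists e2].
move=> yQ; apply/andP; split; last by apply/bigcupP; exists f.
by apply: contraTneq yQ => ->; exact: incident_notin.
Qed.

Lemma weight_merge : weight Rc (A :\ e2) <= weight R A.
Proof.
have [e1A e2A _ _] := incident_edges.
have e1A' : e1 \in A :\ e2 by rewrite !inE e12 e1A.
rewrite (weightD1 _ e2A) !(weightD1 _ e1A') addnA.
have -> : weight Rc (A :\ e2 :\ e1) = weight R (A :\ e2 :\ e1).
  by apply: eq_bigr => f /setD1P[fe1 _]; rewrite /Rc /merge (negbTE fe1).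
rewrite leq_add2r /Rc /merge eqxx addnC.
by have [le_U _] := leq_card_setU (R e1) (R e2).
Qed.

Lemma covered_merge S : e1 \in S -> covered Rc S = covered R (e2 |: S).
Proof.
move=> e1S; apply/setP => y; apply/bigcupP/bigcupP => [[f fS]|[f]].
  rewrite /Rc /merge; case: ifP => [/eqP fe1 /setUP[] yR|_ yR]; rewrite -?fe1.
  - by exists e1; rewrite ?setU1r.
  - by exists e2; rewrite ?setU11.
  - by exists f; rewrite ?setU1r.
case/setU1P => [-> yR|fS yR]; first by exists e1; rewrite // /Rc /merge eqxx inE yR orbT.
by exists f => //; rewrite /Rc /merge; case: eqP => [fe1|//]; rewrite inE -fe1 yR.
Qed.

Lemma covered_setU1_contract S : e1 \in S -> covered Q (e2 |: S) \subset x |: covered Qc S.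
Proof.
move=> e1S; apply/bigcupsP => f fS; apply/subsetP => y yQ; rewrite !inE.
have [//|yx] := eqVneq y x; apply/bigcupP; case/setU1P: fS => [fe2|fS].
  by exists e1; rewrite // /Qc /contract eqxx !inE yx -fe2 yQ orbT.
by exists f; rewrite // /Qc /contract; case: eqVneq => [fe1|//]; rewrite !inE yx -fe1 yQ.
Qed.

Lemma reduction_contract :
  reduction A Q R -> reduction (A :\ e2) Qc Rc.
Proof.
move=> [Q_le2 deficiency]; have [e1A e2A xe1 xe2] := incident_edges; split.
  move=> f /setD1P[_ fA]; rewrite /Qc /contract; case: eqP => _; last exact: Q_le2.
  rewrite setDUl; have [le_U _] := leq_card_setU (Q e1 :\ x) (Q e2 :\ x).
  apply: leq_trans le_U _; rewrite !cardsD1_in //.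
  by have := Q_le2 _ e1A; have := Q_le2 _ e2A; lia.
move=> S /subsetP SA; have [e1S|e1S] := boolP (e1 \in S); last first.
  have off_e1 f : f \in S -> f == e1 = false by apply: contraTF => /eqP ->.
  have -> : covered Qc S = covered Q S.
    by apply: eq_bigr => f /off_e1; rewrite /Qc /contract => ->.
  have -> : covered Rc S = covered R S.
    by apply: eq_bigr => f /off_e1; rewrite /Rc /merge => ->.
  by apply: deficiency; apply/subsetP => f /SA /setD1P[].
have e2S : e2 \notin S by apply/negP => /SA; rewrite !inE eqxx.
have e2SA : e2 |: S \subset A.
  by rewrite subUset sub1set e2A; apply/subsetP => f /SA /setD1P[].
have := deficiency _ e2SA; rewrite -covered_merge // cardsU1 e2S.
have := subset_leq_card (covered_setU1_contract e1S); rewrite cardsU1.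
by case: (x \in covered Qc S); lia.
Qed.
End Contraction.

Lemma heavy_edge_arith (u W a t t' K : nat) :
  W < a * t -> a <= W -> t.-1 <= t' -> 1 < t -> u * t' <= K * (W - a) -> u * t <= K * W.
Proof. by move=> *; nia. Qed.

Lemma certificate_drop_heavy A Q R e : e \in A ->
  weight R A < #|R e| * (#|A| - #|covered Q A|) ->
  (dense Q (A :\ e) -> dense_certificate (A :\ e) Q R) -> dense_certificate A Q R.
Proof.
move=> eA heavy IH; have wA := weightD1 R eA.
have excess2 : 1 < #|A| - #|covered Q A|.
  rewrite ltnNge; apply: contraTN heavy => excess1; rewrite -leqNgt wA.
  by move: (_ - _) excess1 => t; nia.
have cA := cardsD1_in eA.
have cV : #|covered Q (A :\ e)| <= #|covered Q A|.
  exact/subset_leq_card/covered_sub/subD1set.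
have [|U [Udense Ub]] := IH; first by rewrite /dense cA; lia.
exists U; split => //.
apply: (heavy_edge_arith (a := #|R e|) (t' := #|A :\ e| - #|covered Q (A :\ e)|)) => //.
- by rewrite wA leq_addr.
- by rewrite cA; lia.
- by rewrite wA addKn.
Qed.

Lemma certificate_core A Q R : reduction A Q R ->
  (forall x, degree Q A x != 0 -> 2 < degree Q A x) ->
  (forall e, e \in A -> #|R e| * (#|A| - #|covered Q A|) <= weight R A) ->
  dense Q A -> dense_certificate A Q R.
Proof.
move=> [Q_le2 deficiency] degree_ge3 light Adense.
have A0 : A != set0 by rewrite -card_gt0; apply: leq_ltn_trans Adense.
have [D [DA Ddense DK]] := short_dense_subset Q_le2 degree_ge3 A0.
exists (covered R D); split.
  by have := deficiency D DA; move: Ddense; rewrite /dense; lia.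
apply: leq_trans (leq_mul (card_bigcup_leq D R) (leqnn _)) _.
rewrite big_distrl /=; apply: leq_trans (_ : \sum_(e in D) weight R A <= _).
  by apply: leq_sum => e eD; apply: light; exact: (subsetP DA).
by rewrite sum_nat_const leq_mul2r DK orbT.
Qed.

Lemma reduction_certificate A Q R : reduction A Q R -> dense Q A -> dense_certificate A Q R.
Proof.
move: {2}#|A| (leqnn #|A|) => n; elim: n A Q R => [|n IH] A Q R An red Adense.
  by move: Adense; rewrite /dense; lia.
have IH' A' Q' R' : #|A| = #|A'|.+1 ->
    reduction A' Q' R' -> dense Q' A' -> dense_certificate A' Q' R'.
  by move=> cA; apply: IH; lia.
have [/existsP[x /cards1P[e incident]]|no1] := boolP [exists x, degree Q A x == 1].
  have [cA xA sub] := pendant_edge incident.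
  apply: (certificate_drop_vertex cA xA sub (weight_sub R (subD1set A e)) _ Adense).
  exact/(IH' _ _ _ cA)/(reduction_sub (subD1set A e)).
have [/existsP[x /cards2P[e1 [e2 [e12 incident]]]]|no2] := boolP [exists x, degree Q A x == 2].
  have [e1A e2A xe1 _] := incident_edges incident.
  have cA : #|A| = #|A :\ e2|.+1 by rewrite (cardsD1 e2) e2A add1n.
  have xA : x \in covered Q A by apply/bigcupP; exists e1.
  apply: (certificate_drop_vertex cA xA (covered_contract incident)
    (weight_merge R incident e12) _ Adense).
  exact/(IH' _ _ _ cA)/(reduction_contract incident e12).
have [/exists_inP[e eA heavy]|/exists_inPn light] :=
  boolP [exists e in A, weight R A < #|R e| * (#|A| - #|covered Q A|)].
  apply: (certificate_drop_heavy eA heavy); apply: IH' (reduction_sub (subD1set A e) red).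
  by rewrite (cardsD1 e) eA add1n.
apply: certificate_core red _ _ Adense => [x|e eA]; last by rewrite leqNgt light.
move/existsPn: no1 => /(_ x); move/existsPn: no2 => /(_ x).
by case: (degree Q A x) => [|[|[|]]].
Qed.

Lemma covered_set1 S : covered (fun e => [set e]) S = S.
Proof.
apply/setP => e; apply/bigcupP/idP => [[f fS /set1P-> //]|eS].
by exists e; rewrite ?inE.
Qed.

Theorem dense_subset_bound : (forall e, #|Q0 e| <= 2) -> #|V| < #|I| ->
  exists U, dense Q0 U /\ #|U| * (#|I| - #|V|) <= short_dense_bound V * #|I|.
Proof.
move=> Q_le2 VI; pose Id (e : I) := [set e].
have red : reduction [set: I] Q0 Id by split=> // S _; rewrite covered_set1 addnC.
have [|U [Udense Ub]] := reduction_certificate red.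
  by rewrite /dense cardsT; apply: leq_ltn_trans (max_card _) VI.
exists U; split => //; apply: leq_trans (leq_trans _ Ub) _.
  by rewrite leq_mul2l cardsT leq_sub2l ?orbT ?max_card.
by rewrite /weight (eq_bigr (fun _ => 1)) => [|e _]; rewrite ?sum1_card ?cardsT ?cards1.
Qed.
End Reduction.

Section DataStructure.
Variables (F : finFieldType) (n m k s : nat) (f : {ffun 'I_n -> F} -> 'I_m -> F).
Hypothesis k_le_m : k <= m.
Hypothesis f_indep : kwise_independent k f.

Lemma kwise_realizable (T : {set 'I_m}) (a : {ffun 'I_m -> F}) :
  #|T| = k -> exists x, [forall i in T, f x i == a i].
Proof.
move=> cT; have := f_indep cT a; have F0 : 0 < #|F| by apply/card_gt0P; exists 0%R.
case: (set_0Vmem [set x | [forall i in T, f x i == a i]]) => [->|[x]].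
  by rewrite cards0 mul0n => /esym/eqP; rewrite expn_eq0 eqn0Ngt F0.
by rewrite inE; exists x.
Qed.

Lemma dense_queries_large (P : {ffun 'I_n -> F} -> {ffun 'I_s -> F}) (Q : 'I_m -> {set 'I_s})
    (g : 'I_m -> {ffun 'I_s -> F} -> F) :
  (forall i (c c' : {ffun 'I_s -> F}),
     (forall j, j \in Q i -> c j = c' j) -> g i c = g i c') ->
  (forall x i, f x i = g i (P x)) ->
  forall S, dense Q S -> k < #|S|.
Proof.
move=> local correct S Sdense; rewrite ltnNge; apply: contraL Sdense => Sk; rewrite -leqNgt.
have [T sT cT] : exists2 T : {set 'I_m}, S \subset T & #|T| = k.
  by apply: exists_superset_card; rewrite ?card_ord.
pose xa a := xchoose (kwise_realizable a cT).
have xaP a i : i \in T -> f (xa a) i = a i.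
  by move=> iT; have /forall_inP/(_ i iT)/eqP := xchooseP (kwise_realizable a cT).
pose U := covered Q S.
pose ext (b : {ffun {i | i \in S} -> F}) : {ffun 'I_m -> F} :=
  [ffun i => if insub i is Some j then b j else 0%R].
pose observe b : {ffun {j | j \in U} -> F} := [ffun j => P (xa (ext b)) (val j)].
have observe_inj : injective observe.
  move=> b1 b2 eq_obs; apply/ffunP => i.
  have iT : val i \in T by apply: (subsetP sT); exact: valP.
  have extE (b : {ffun {i | i \in S} -> F}) : b i = ext b (val i) by rewrite ffunE valK.
  rewrite !extE -!xaP // !correct; apply: local => c cQ.
  have cU : c \in U by apply/bigcupP; exists (val i) => //; exact: valP.
  have := congr1 (fun h : {ffun {j : 'I_s | j \in U} -> F} => h (exist _ c cU)) eq_obs.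
  by rewrite !ffunE.
have F1 : 1 < #|F| by apply/card_gt1P; exists 0%R, 1%R; rewrite eq_sym oner_neq0.
by have := leq_card observe observe_inj; rewrite !card_ffun !card_sig leq_exp2l.
Qed.
End DataStructure.

Local Open Scope ring_scope.

Lemma trunc_log2_le_log2 (R : realType) (s : nat) :
  (0 < s)%N -> (trunc_log 2 s)%:R <= log2 (s%:R : R).
Proof.
move=> s0; rewrite /log2 ler_pdivlMr; last by apply: ln_gt0; rewrite ltr1n.
rewrite mulr_natl -lnXn // ler_ln ?posrE ?exprn_gt0 ?ltr0n //.
by rewrite -natrX ler_nat trunc_logP.
Qed.

Lemma excess_le_log2 (R : realType) (m k s : nat) : (0 < s)%N -> (0 < k)%N ->
  (k * (m - s) <= 16 * trunc_log 2 s * m)%N ->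
  m%:R - 16 * m%:R * log2 (s%:R : R) / k%:R <= s%:R.
Proof.
move=> s0 k0 bound.
have subB : (m%:R - s%:R : R) <= (m - s)%N%:R.
  have [sm|ms] := leqP s m; first by rewrite natrB.
  by rewrite (_ : (m - s)%N = 0%N) ?subr_le0 ?ler_nat ?(ltnW ms) //; lia.
suff : m%:R - s%:R <= 16 * m%:R * log2 (s%:R : R) / k%:R by lra.
rewrite ler_pdivlMr ?ltr0n // mulrC; apply: le_trans (ler_wpM2l (ler0n _ _) subB) _.
apply: le_trans (_ : (16 * trunc_log 2 s * m)%N%:R <= _); first by rewrite -natrM ler_nat.
rewrite !natrM mulrAC ler_wpM2l ?mulr_ge0 //; exact: trunc_log2_le_log2.
Qed.

Theorem mainTheorem2 (R : realType) (F : finFieldType) (n m k s : nat)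
  (f : {ffun 'I_n -> F} -> 'I_m -> F) :
  (k <= m)%N ->
  kwise_independent k f ->
  nonadaptive_ds f s 2 ->
  (2 <= s)%N ->
  8 * log2 (s%:R : R) < k%:R ->
  m%:R - 16 * m%:R * log2 (s%:R : R) / k%:R <= (s%:R : R).
Proof.
move=> km f_indep [P [Q [g [Q_le2 local correct]]]] s2 hlog.
have s0 : (0 < s)%N by apply: ltnW.
have k0 : (0 < k)%N.
  rewrite -(ltr0n R); apply: le_lt_trans hlog; rewrite mulr_ge0 //.
  exact: le_trans (ler0n _ _) (trunc_log2_le_log2 R s0).
apply: excess_le_log2 => //; have [ms|sm] := leqP m s.
  by rewrite (_ : (m - s)%N = 0%N) ?muln0 //; apply/eqP; rewrite subn_eq0.
have [|U [Udense Ub]] := dense_subset_bound Q_le2; first by rewrite !card_ord.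
have kU := dense_queries_large km f_indep local correct Udense.
have L0 : (0 < trunc_log 2 s)%N by rewrite trunc_log_gt0.
move: Ub; rewrite /short_dense_bound !card_ord => Ub.
apply: leq_trans (leq_mul (ltnW kU) (leqnn _)) (leq_trans Ub _).
by rewrite leq_mul2r; apply/orP; right; lia.
Qed.
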